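(* For every integer $x\geq 3$ and each $i\in[1,8]$, there exists a $D_i$-decomposition of the digraph $K^*_{(2x)\times 7}-xK^*_{7,7}$, i.e.\ of the digraph with vertex set $H_1\cup\dots\cup H_{2x}$ (pairwise disjoint sets $H_j$ with $|H_j|=7$) whose arcs are all $(a,b)$ with $a\in H_j$, $b\in H_k$, $j\neq k$, except those with $\{j,k\}=\{2m-1,2m\}$ for some $m\in[1,x]$.
   Context: For a simple graph $G$, $G^*$ is the digraph with vertex set $V(G)$ and arc set $\bigcup_{\{x,y\}\in E(G)}\{(x,y),(y,x)\}$. $K_{r\times s}$ is the complete multipartite simple graph with $r$ parts each of size $s$, $K^*_{r\times s}=(K_{r\times s})^*$, and $K^*_{7,7}=(K_{7,7})^*$. A $D$-decomposition of a digraph $K$ is a set of subdigraphs of $K$, each isomorphic to $D$, such that every arc of $K$ lies in exactly one of them. For distinct vertices $v_0,\dots,v_6$, the digraphs $D_i[v_0,v_1,\dots,v_6]$ ($i\in[1,8]$) all have vertex set $\{v_0,\dots,v_6\}$ and the following arc sets: $D_1$: $(v_1,v_0),(v_1,v_2),(v_2,v_3),(v_3,v_4),(v_4,v_5),(v_5,v_6),(v_6,v_0)$; $D_2$: $(v_1,v_0),(v_2,v_1),(v_2,v_3),(v_3,v_4),(v_4,v_5),(v_5,v_6),(v_6,v_0)$; $D_3$: $(v_1,v_0),(v_1,v_2),(v_3,v_2),(v_3,v_4),(v_4,v_5),(v_5,v_6),(v_6,v_0)$; $D_4$: $(v_1,v_0),(v_1,v_2),(v_2,v_3),(v_4,v_3),(v_4,v_5),(v_5,v_6),(v_6,v_0)$;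 $D_5$: $(v_1,v_0),(v_2,v_1),(v_3,v_2),(v_3,v_4),(v_4,v_5),(v_5,v_6),(v_6,v_0)$; $D_6$: $(v_1,v_0),(v_2,v_1),(v_2,v_3),(v_3,v_4),(v_5,v_4),(v_5,v_6),(v_6,v_0)$; $D_7$: $(v_1,v_0),(v_1,v_2),(v_3,v_2),(v_3,v_4),(v_4,v_5),(v_6,v_5),(v_6,v_0)$; $D_8$: $(v_1,v_0),(v_2,v_1),(v_2,v_3),(v_4,v_3),(v_4,v_5),(v_5,v_6),(v_6,v_0)$. $D_i$ also denotes the isomorphism type of $D_i[v_0,\dots,v_6]$. *)

From mathcomp Require Import all_boot.
Set Implicit Arguments. Unset Strict Implicit. Unset Printing Implicit Defensive.

(* Arc lists of D_1..D_8 on vertex indices v_0..v_6 (v_k is index k). *)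
Definition D_arcs (i : nat) : seq (nat * nat) :=
  match i with
  | 1 => [:: (1,0); (1,2); (2,3); (3,4); (4,5); (5,6); (6,0)]
  | 2 => [:: (1,0); (2,1); (2,3); (3,4); (4,5); (5,6); (6,0)]
  | 3 => [:: (1,0); (1,2); (3,2); (3,4); (4,5); (5,6); (6,0)]
  | 4 => [:: (1,0); (1,2); (2,3); (4,3); (4,5); (5,6); (6,0)]
  | 5 => [:: (1,0); (2,1); (3,2); (3,4); (4,5); (5,6); (6,0)]
  | 6 => [:: (1,0); (2,1); (2,3); (3,4); (5,4); (5,6); (6,0)]
  | 7 => [:: (1,0); (1,2); (3,2); (3,4); (4,5); (6,5); (6,0)]
  | 8 => [:: (1,0); (2,1); (2,3); (4,3); (4,5); (5,6); (6,0)]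
  | _ => [::]
  end.

Definition copy_arcs (T : finType) (A : seq (nat * nat)) (f : {ffun 'I_7 -> T})
  : seq (T * T) :=
  [seq (f (inord p.1), f (inord p.2)) | p <- A].

Definition is_decomposition (T : finType) (K : rel T) (A : seq (nat * nat))
  (B : seq {ffun 'I_7 -> T}) : Prop :=
  (forall f, f \in B -> injective f /\ (forall e, e \in copy_arcs A f -> K e.1 e.2))
  /\ (forall a b, K a b -> count (fun f => (a, b) \in copy_arcs A f) B = 1).

(* Vertices of K*_{(2x) x 7} - x K*_{7,7}: part H_j (j < 2x, 0-indexed) times
   an index in 'I_7.  Removed pairs of parts: {2m, 2m+1} (0-indexed). *)
Definition Vx (x : nat) : finType := ('I_(2 * x) * 'I_7)%type.

Definition Kx (x : nat) : rel (Vx x) :=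
  fun a b => ((a.1 : nat) %/ 2 != (b.1 : nat) %/ 2).

From mathcomp Require Import all_boot zify.
Set Implicit Arguments. Unset Strict Implicit. Unset Printing Implicit Defensive.

(* The difference method.  Write x = m + inf with m odd and inf in {0, 1}: the x pairs
   {H_2j, H_2j+1} are the groups, m of them indexed by Z_m, plus a fixed point at infinity
   when x is even.  A vertex is (group, side h in {0, 1}, a in Z_7), and Z_m x Z_7 acts by
   translation.  Each D_i is an oriented 7-cycle; putting its vertices at levels
   0,1,0,1,0,1,2 and scaling the levels by d in [1, m - 1] makes its arcs join groups at
   differences +-d and +-2d, and as m is odd every nonzero difference arises from exactly
   one d.  So four base blocks whose 28 arcs have pairwise distinct classes
   (h, h', a' - a) yield, over all d and translations, every arc between finite groups
   exactly once.  For even x, two base blocks at d = 1 are traded for ten special base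
   blocks that also cover the arcs to and from infinity.  These base blocks form a
   certificate, checked by computation for each i; a decoding map sending each arc to the
   block containing it proves that the translates form a decomposition. *)

(** * Decompositions from a decoding map *)

Lemma copy_arcsP (T : finType) (A : seq (nat * nat)) (f : {ffun 'I_7 -> T}) u v :
  reflect (exists2 e, e < size A &
             f (inord (nth (0, 0) A e).1) = u /\ f (inord (nth (0, 0) A e).2) = v)
          ((u, v) \in copy_arcs A f).
Proof.
apply: (iffP mapP) => [[p A_p [-> ->]]|[e lt_e [<- <-]]].
- by move/(nthP (0, 0)): A_p => [e lt_e <-]; exists e.
- by exists (nth (0, 0) A e); rewrite ?mem_nth.
Qed.

Lemma decomposition_from_decoder (T : finType) (K : rel T) (A : seq (nat * nat))
    (I : eqType) (L : seq I) (block : I -> {ffun 'I_7 -> T}) (decode : T -> T -> I) :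
  uniq L ->
  (forall z, z \in L -> injective (block z)) ->
  (forall z u v, z \in L -> (u, v) \in copy_arcs A (block z) -> K u v /\ decode u v = z) ->
  (forall u v, K u v -> decode u v \in L /\ (u, v) \in copy_arcs A (block (decode u v))) ->
  is_decomposition K A (map block L).
Proof.
move=> uniqL block_inj block_arc decodeP; split.
  move=> _ /mapP [z Lz ->]; split=> [|[u v] /(block_arc _ _ _ Lz) []//].
  exact: block_inj.
move=> u v Kuv; have [L_dec arc_dec] := decodeP u v Kuv.
rewrite count_map (@eq_in_count _ _ (pred1 (decode u v))) ?count_uniq_mem ?L_dec //.
by move=> z Lz /=; apply/idP/eqP => [/(block_arc _ _ _ Lz) [_ ->] | ->].
Qed.

(** * Residues *)

Lemma divn2_double_add r h : h <= 1 -> (2 * r + h) %/ 2 = r.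
Proof. lia. Qed.

Lemma modn2_double_add r h : h <= 1 -> (2 * r + h) %% 2 = h.
Proof. lia. Qed.

(* Arithmetic of Z_m on representatives in [0, m).  Reduction is written by cases rather
   than with [%%], so that [lia] can reason about a variable modulus.  For distinct levels
   a, b <= 2 and odd m, [zsolve m a b D] is the d with (b - a) * d = D in Z_m. *)
Definition zred m v := if v < m then v else if v < 2 * m then v - m else v - 2 * m.
Definition zsub m g c := if c <= g then g - c else g + m - c.
Definition zhalf m D := if odd D then (D + m)./2 else D./2.
Definition zsolve m a b D :=
  match a, b with
  | 0, 1 | 1, 2 => D
  | 1, 0 | 2, 1 => m - D
  | 0, 2 => zhalf m D
  | 2, 0 => zhalf m (m - D)
  | _, _ => 0
  end.

Lemma zredP m v : (v < m /\ zred m v = v) \/ (m <= v < 2 * m /\ zred m v = v - m) \/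
  (2 * m <= v /\ zred m v = v - 2 * m).
Proof. rewrite /zred; case: ifP => ?; [|case: ifP => ?]; lia. Qed.
Lemma zsubP m g c : (c <= g /\ zsub m g c = g - c) \/ (g < c /\ zsub m g c = g + m - c).
Proof. rewrite /zsub; case: ifP => ?; lia. Qed.
Lemma zhalfP m D : (odd D /\ zhalf m D = (D + m)./2) \/ (~~ odd D /\ zhalf m D = D./2).
Proof. rewrite /zhalf; case: ifP => ?; lia. Qed.

Ltac zgen f spec :=
  let r := fresh "r" in let H := fresh "H" in
  pose proof spec as H; set (r := f) in *; clearbody r.
Ltac zlia :=
  repeat match goal with
  | |- context[zred ?m ?v] => zgen (zred m v) (zredP m v)
  | _ : context[zred ?m ?v] |- _ => zgen (zred m v) (zredP m v)
  | |- context[zsub ?m ?v ?w] => zgen (zsub m v w) (zsubP m v w)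
  | _ : context[zsub ?m ?v ?w] |- _ => zgen (zsub m v w) (zsubP m v w)
  | |- context[zhalf ?m ?v] => zgen (zhalf m v) (zhalfP m v)
  | _ : context[zhalf ?m ?v] |- _ => zgen (zhalf m v) (zhalfP m v)
  end;
  repeat match goal with H : _ \/ _ |- _ => destruct H as [H|H] end;
  repeat match goal with H : _ /\ _ |- _ => destruct H end;
  lia.

Lemma odd_split x : 3 <= x ->
  [/\ x = (x - ~~ odd x) + ~~ odd x, odd (x - ~~ odd x) & 3 <= x - ~~ odd x].
Proof. by case odd_x: (odd x) => /=; split; lia. Qed.

Section Residues.
Variable m : nat.

Lemma zred_lt v : 0 < m -> v < 3 * m -> zred m v < m.
Proof. zlia. Qed.

Lemma zsub_lt g c : g < m -> c <= m -> zsub m g c < m.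
Proof. zlia. Qed.

Lemma zsub_gt0 g g' : g < m -> g' < m -> g != g' -> 0 < zsub m g' g < m.
Proof. zlia. Qed.

Lemma zred_add_inj g c c' : 3 <= m -> g < m -> c <= 2 -> c' <= 2 ->
  zred m (c + g) = zred m (c' + g) -> c = c'.
Proof. zlia. Qed.

Lemma zred_addK g c : 3 <= m -> g < m -> c <= 2 -> zsub m (zred m (c + g)) c = g.
Proof. zlia. Qed.

Lemma zred_small v : v < m -> zred m v = v.
Proof. by rewrite /zred => ->. Qed.

Lemma zsubKC g c : 3 <= m -> g < m -> c <= 2 -> zred m (c + zsub m g c) = g.
Proof. zlia. Qed.

Lemma zsubKC_zred v g : 0 < m -> v < 2 * m -> g < m -> zred m (v + zsub m g (zred m v)) = g.
Proof. zlia. Qed.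

Lemma zsubKC_shift v w g g' : 0 < m -> v < 2 * m -> w < 2 * m -> g < m -> g' < m ->
  zred m w = zred m (v + zsub m g' g) -> zred m (w + zsub m g (zred m v)) = g'.
Proof. zlia. Qed.

Lemma zsub_zred_mul a d g : 3 <= m -> d < m -> g < m -> a <= 2 ->
  zsub m (zred m (a * d + g)) (zred m (a * d)) = g.
Proof. by case: a => [|[|[|a]]] // *; zlia. Qed.

Section Levels.
Variables a b : nat.
Hypotheses (odd_m : odd m) (m_ge3 : 3 <= m) (a_le2 : a <= 2) (b_le2 : b <= 2) (neq_ab : a != b).

Lemma zred_mul_add_neq d g : 0 < d < m -> g < m -> zred m (a * d + g) != zred m (b * d + g).
Proof.
move: a_le2 b_le2 neq_ab; case: a => [|[|[|?]]] //; case: b => [|[|[|?]]] // *; apply/eqP; zlia.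
Qed.

Lemma zsolve_zsub d g : 0 < d < m -> g < m ->
  zsolve m a b (zsub m (zred m (b * d + g)) (zred m (a * d + g))) = d.
Proof.
move: a_le2 b_le2 neq_ab; case: a => [|[|[|?]]] //; case: b => [|[|[|?]]] // *;
  rewrite /zsolve; zlia.
Qed.

Lemma zsolveP D : 0 < D < m ->
  0 < zsolve m a b D < m /\ zred m (b * zsolve m a b D) = zred m (a * zsolve m a b D + D).
Proof.
move: a_le2 b_le2 neq_ab; case: a => [|[|[|?]]] //; case: b => [|[|[|?]]] // *;
  rewrite /zsolve; split; zlia.
Qed.

Lemma zsolve_translate g g' : g < m -> g' < m -> g != g' ->
  let d := zsolve m a b (zsub m g' g) in let g0 := zsub m g (zred m (a * d)) in
  [/\ 0 < d < m, zred m (a * d + g0) = g & zred m (b * d + g0) = g'].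
Proof.
move=> lt_g lt_g' neq_gg' d g0.
have [lt_d Ed] := zsolveP (zsub_gt0 lt_g lt_g' neq_gg').
split=> //.
  by apply: zsubKC_zred => //; nia.
by apply: zsubKC_shift Ed => //; nia.
Qed.

End Levels.
End Residues.


Definition diff7 u v := (v + 7 - u) %% 7.

Lemma diff7_lt u v : diff7 u v < 7.
Proof. exact: ltn_pmod. Qed.

Lemma diff7_translate u v a : u < 7 -> v < 7 -> a < 7 ->
  diff7 ((u + a) %% 7) ((v + a) %% 7) = diff7 u v.
Proof. rewrite /diff7; lia. Qed.

Lemma diff7_addK u a : u < 7 -> a < 7 -> diff7 u ((u + a) %% 7) = a.
Proof. rewrite /diff7; lia. Qed.

Lemma add_diff7 u a : u < 7 -> a < 7 -> (u + diff7 u a) %% 7 = a.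
Proof. rewrite /diff7; lia. Qed.

Lemma add_diff7_head u v a a' : u < 7 -> v < 7 -> a < 7 -> a' < 7 ->
  diff7 u v = diff7 a a' -> (v + diff7 u a) %% 7 = a'.
Proof. rewrite /diff7; lia. Qed.

Lemma add_diff7_tail u v a a' : u < 7 -> v < 7 -> a < 7 -> a' < 7 ->
  diff7 u v = diff7 a a' -> (u + diff7 v a') %% 7 = a.
Proof. rewrite /diff7; lia. Qed.

(** * Certificates *)

Definition level t := nth 0 [:: 0; 1; 0; 1; 0; 1; 2] t.

Lemma level_le2 t : level t <= 2.
Proof. by rewrite /level; case: t => [|[|[|[|[|[|[|[]]]]]]]]. Qed.

(* Vertex t of the regular base block k, at difference d and translated by (g, a), lies in
   group g + level t * d, side [base_h k t] and Z_7-coordinate [base_a k t] + a.  Vertex t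
   of the special block s lies at infinity if [special_inf s t] (encoded as 1), and
   otherwise in group g + [special_level s t]; its side and coordinate are given likewise
   by [special_h] and [special_a].  The regular blocks [replaced1] and [replaced2] at
   difference 1 are dropped when x is even. *)
Record certificate := Certificate {
  base_h_table : seq (seq nat);
  base_a_table : seq (seq nat);
  special_inf_table : seq (seq nat);
  special_level_table : seq (seq nat);
  special_h_table : seq (seq nat);
  special_a_table : seq (seq nat);
  replaced1 : nat;
  replaced2 : nat }.

Section Certificate.
Variables (A : seq (nat * nat)) (C : certificate).

Definition arc_tail e := (nth (0, 0) A e).1.
Definition arc_head e := (nth (0, 0) A e).2.

Definition base_h k t := nth 0 (nth [::] (base_h_table C) k) t.
Definition base_a k t := nth 0 (nth [::] (base_a_table C) k) t.
Definition special_inf s t := nth 0 (nth [::] (special_inf_table C) s) t == 1.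
Definition special_level s t := nth 0 (nth [::] (special_level_table C) s) t.
Definition special_h s t := nth 0 (nth [::] (special_h_table C) s) t.
Definition special_a s t := nth 0 (nth [::] (special_a_table C) s) t.
Definition replaced k := (k == replaced1 C) || (k == replaced2 C).

Definition base_class k e :=
  (base_h k (arc_tail e), base_h k (arc_head e),
   diff7 (base_a k (arc_tail e)) (base_a k (arc_head e))).
Definition special_class s e :=
  (special_h s (arc_tail e), special_h s (arc_head e),
   diff7 (special_a s (arc_tail e)) (special_a s (arc_head e))).
Definition special_kind s e := special_inf s (arc_tail e) + 2 * special_inf s (arc_head e).

Definition classes := [seq (hh.1, hh.2, d) | hh <- [seq (h, h') | h <- iota 0 2, h' <- iota 0 2],
                                             d <- iota 0 7].
Definition base_arcs := [seq (k, e) | k <- iota 0 4, e <- iota 0 7].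
Definition special_arcs := [seq (s, e) | s <- iota 0 10, e <- iota 0 7].

Definition base_arc_of c :=
  nth (0, 0) base_arcs (find (fun z => base_class z.1 z.2 == c) base_arcs).
Definition special_arc_of j c :=
  nth (0, 0) special_arcs
      (find (fun z => (special_kind z.1 z.2 == j) && (special_class z.1 z.2 == c)) special_arcs).
Definition replacement k e := special_arc_of 0 (base_class k e).

Definition all_lt n (P : pred nat) := all P (iota 0 n).

Record valid_certificate : Prop := ValidCertificate {
  arcs_ok : (size A == 7) &&
    all_lt 7 (fun e =>
      [&& arc_tail e < 7, arc_head e < 7 & level (arc_tail e) != level (arc_head e)]);
  base_ranges_ok : all_lt 4 (fun k => all_lt 7 (fun t => (base_h k t <= 1) && (base_a k t < 7)));
  base_inj_ok : all_lt 4 (fun k => all_lt 7 (fun t => all_lt 7 (fun t' =>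
    [|| t == t', level t != level t', base_h k t != base_h k t' | base_a k t != base_a k t'])));
  base_class_inj_ok :
    all_lt 4 (fun k => all_lt 7 (fun e => base_arc_of (base_class k e) == (k, e)));
  base_class_surj_ok : all (fun c => let z := base_arc_of c in
    [&& z.1 < 4, z.2 < 7 & base_class z.1 z.2 == c]) classes;
  special_ranges_ok : all_lt 10 (fun s => all_lt 7 (fun t =>
    [&& special_h s t <= 1, special_a s t < 7 & special_level s t <= 2]));
  special_inj_ok : all_lt 10 (fun s => all_lt 7 (fun t => all_lt 7 (fun t' =>
    [|| t == t', special_inf s t != special_inf s t',
        special_inf s t &&
          ((special_h s t != special_h s t') || (special_a s t != special_a s t')) |
        ~~ special_inf s t &&
          [|| special_level s t != special_level s t', special_h s t != special_h s t' |
              special_a s t != special_a s t']])));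
  special_class_ok : all_lt 10 (fun s => all_lt 7 (fun e =>
    match special_kind s e with
    | 0 => let z := base_arc_of (special_class s e) in
           [&& replaced z.1, z.2 < 7, special_level s (arc_tail e) == level (arc_tail z.2),
               special_level s (arc_head e) == level (arc_head z.2) & replacement z.1 z.2 == (s, e)]
    | 1 => special_arc_of 1 (special_class s e) == (s, e)
    | 2 => special_arc_of 2 (special_class s e) == (s, e)
    | _ => false
    end));
  special_class_surj_ok : all (fun c => all (fun j => let z := special_arc_of j c in
    [&& z.1 < 10, z.2 < 7, special_kind z.1 z.2 == j & special_class z.1 z.2 == c]) [:: 1; 2])
    classes;
  replacement_ok : all (fun k => all_lt 7 (fun e => let z := replacement k e in
    [&& z.1 < 10, z.2 < 7, special_kind z.1 z.2 == 0, special_class z.1 z.2 == base_class k e,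
        special_level z.1 (arc_tail z.2) == level (arc_tail e) &
        special_level z.1 (arc_head z.2) == level (arc_head e)])) [:: replaced1 C; replaced2 C] }.

Hypothesis HC : valid_certificate.

Lemma all_ltP n (P : pred nat) k : all_lt n P -> k < n -> P k.
Proof. by move=> /allP P_n lt_k; apply: P_n; rewrite mem_iota. Qed.

Lemma size_arcs : size A = 7.
Proof. by case/andP: (arcs_ok HC) => /eqP. Qed.

Lemma arcP e : e < 7 ->
  [/\ arc_tail e < 7, arc_head e < 7 & level (arc_tail e) != level (arc_head e)].
Proof. by case/andP: (arcs_ok HC) => _ /all_ltP ok /ok /and3P. Qed.

Lemma base_rangeP k t : k < 4 -> t < 7 -> base_h k t <= 1 /\ base_a k t < 7.
Proof. by move=> lt_k lt_t; apply/andP/(all_ltP (all_ltP (base_ranges_ok HC) lt_k) lt_t). Qed.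

Lemma base_vertex_inj k t t' : k < 4 -> t < 7 -> t' < 7 -> t != t' ->
  [|| level t != level t', base_h k t != base_h k t' | base_a k t != base_a k t'].
Proof.
move=> lt_k lt_t lt_t' neq_tt'.
by move: (all_ltP (all_ltP (all_ltP (base_inj_ok HC) lt_k) lt_t) lt_t'); rewrite (negPf neq_tt').
Qed.

Lemma base_arc_ofK k e : k < 4 -> e < 7 -> base_arc_of (base_class k e) = (k, e).
Proof. by move=> lt_k lt_e; apply/eqP/(all_ltP (all_ltP (base_class_inj_ok HC) lt_k) lt_e). Qed.

Lemma mem_classes h h' d : h < 2 -> h' < 2 -> d < 7 -> (h, h', d) \in classes.
Proof.
move=> lt_h lt_h' lt_d; apply/allpairsP; exists ((h, h'), d); rewrite mem_iota.
by split=> //; apply/allpairsP; exists (h, h'); rewrite !mem_iota.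
Qed.

Lemma base_arc_ofP h h' d : h < 2 -> h' < 2 -> d < 7 ->
  let z := base_arc_of (h, h', d) in [/\ z.1 < 4, z.2 < 7 & base_class z.1 z.2 = (h, h', d)].
Proof.
move=> lt_h lt_h' lt_d z; rewrite {}/z.
by move/allP/(_ _ (mem_classes lt_h lt_h' lt_d))/and3P: (base_class_surj_ok HC) => [-> -> /eqP].
Qed.

Lemma special_rangeP s t : s < 10 -> t < 7 ->
  [/\ special_h s t <= 1, special_a s t < 7 & special_level s t <= 2].
Proof. by move=> lt_s lt_t; apply/and3P/(all_ltP (all_ltP (special_ranges_ok HC) lt_s) lt_t). Qed.

Lemma special_vertex_inj s t t' : s < 10 -> t < 7 -> t' < 7 -> t != t' ->
  [|| special_inf s t != special_inf s t',
      special_inf s t && ((special_h s t != special_h s t') || (special_a s t != special_a s t')) |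
      ~~ special_inf s t && [|| special_level s t != special_level s t',
                                special_h s t != special_h s t' | special_a s t != special_a s t']].
Proof.
move=> lt_s lt_t lt_t' neq_tt'.
by move: (all_ltP (all_ltP (all_ltP (special_inj_ok HC) lt_s) lt_t) lt_t'); rewrite (negPf neq_tt').
Qed.

Lemma special_classP s e : s < 10 -> e < 7 ->
  match special_kind s e with
  | 0 => let z := base_arc_of (special_class s e) in
         [&& replaced z.1, z.2 < 7, special_level s (arc_tail e) == level (arc_tail z.2),
             special_level s (arc_head e) == level (arc_head z.2) & replacement z.1 z.2 == (s, e)]
  | 1 => special_arc_of 1 (special_class s e) == (s, e)
  | 2 => special_arc_of 2 (special_class s e) == (s, e)
  | _ => false
  end.
Proof. by move=> lt_s lt_e; apply: (all_ltP (all_ltP (special_class_ok HC) lt_s) lt_e). Qed.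

Lemma special_arc_ofP j h h' d : (j == 1) || (j == 2) -> h < 2 -> h' < 2 -> d < 7 ->
  let z := special_arc_of j (h, h', d) in
  [/\ z.1 < 10, z.2 < 7, special_kind z.1 z.2 = j & special_class z.1 z.2 = (h, h', d)].
Proof.
move=> j12 lt_h lt_h' lt_d z; rewrite {}/z.
move/allP/(_ _ (mem_classes lt_h lt_h' lt_d)): (special_class_surj_ok HC).
move=> /= /andP [ok1 /andP [ok2 _]].
by case/orP: j12 => /eqP ->; [move: ok1 | move: ok2] => /and4P [-> -> /eqP -> /eqP ->].
Qed.

Lemma replacementP k e : replaced k -> e < 7 -> let z := replacement k e in
  [/\ z.1 < 10, z.2 < 7, special_kind z.1 z.2 = 0, special_class z.1 z.2 = base_class k e &
      special_level z.1 (arc_tail z.2) = level (arc_tail e) /\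
      special_level z.1 (arc_head z.2) = level (arc_head e)].
Proof.
move=> rep_k lt_e z; rewrite {}/z.
have k_rep : k \in [:: replaced1 C; replaced2 C] by rewrite !inE.
move: (all_ltP (allP (replacement_ok HC) k k_rep) lt_e).
by move=> /and5P [-> -> /eqP -> /eqP -> /andP [/eqP -> /eqP ->]].
Qed.

(** * The translates of a certificate *)

Section Construction.
Variables (x m : nat) (inf : bool).
Hypotheses (x_eq : x = m + inf) (odd_m : odd m) (m_ge3 : 3 <= m).

(* Base block n < ndiff is the regular block n %% 4 at difference n %/ 4 + 1, and
   ndiff + s is the special block s.  Part J of the vertex set is side J %% 2 of group
   J %/ 2, and group m is the point at infinity. *)
Definition ndiff := 4 * (m - 1).
Definition is_special n := ndiff <= n.
Definition in_use n :=
  ((n < ndiff) && ~~ [&& inf, n %/ 4 == 0 & replaced (n %% 4)]) ||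
  [&& inf, ndiff <= n & n < ndiff + 10].

Definition at_inf n t := is_special n && special_inf (n - ndiff) t.
Definition offset n t :=
  if is_special n then special_level (n - ndiff) t else level t * (n %/ 4 + 1).
Definition side n t := if is_special n then special_h (n - ndiff) t else base_h (n %% 4) t.
Definition shift n t := if is_special n then special_a (n - ndiff) t else base_a (n %% 4) t.

Definition part n g t :=
  if at_inf n t then 2 * m + side n t else 2 * zred m (offset n t + g) + side n t.
Definition coord n a t := (shift n t + a) %% 7.

Lemma part_special s g t : part (ndiff + s) g t =
  if special_inf s t then 2 * m + special_h s t
  else 2 * zred m (special_level s t + g) + special_h s t.
Proof. by rewrite /part /at_inf /offset /side /is_special leq_addr addKn. Qed.

Lemma coord_special s a t : coord (ndiff + s) a t = (special_a s t + a) %% 7.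
Proof. by rewrite /coord /shift /is_special leq_addr addKn. Qed.

Lemma part_regular n g t : ~~ is_special n ->
  part n g t = 2 * zred m (level t * (n %/ 4 + 1) + g) + base_h (n %% 4) t.
Proof. by rewrite /part /at_inf /offset /side => /negPf ->. Qed.

Lemma coord_regular n a t : ~~ is_special n -> coord n a t = (base_a (n %% 4) t + a) %% 7.
Proof. by rewrite /coord /shift => /negPf ->. Qed.

Lemma in_use_special n : in_use n -> is_special n -> inf /\ n - ndiff < 10.
Proof. rewrite /in_use /is_special => /orP [/andP [? _]|/and3P [-> ? ?]] ?; lia. Qed.

Lemma in_use_regular n : in_use n -> ~~ is_special n ->
  [/\ n %% 4 < 4, 0 < n %/ 4 + 1 < m & ~~ [&& inf, n %/ 4 + 1 == 1 & replaced (n %% 4)]].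
Proof.
rewrite /in_use /is_special -ltnNge => /orP [/andP [lt_n not_rep] _|/and3P [_ ? _] ?]; last lia.
by split; [lia | rewrite /ndiff in lt_n; lia | rewrite addn1 eqSS].
Qed.

Lemma in_use_lt n : in_use n -> n < ndiff + 10.
Proof. rewrite /in_use; lia. Qed.

Lemma part_lt n g t : in_use n -> g < m -> t < 7 -> part n g t < 2 * x.
Proof.
move=> use_n lt_g lt_t; have m_gt0 : 0 < m by lia.
have [spec_n|reg_n] := boolP (is_special n).
  have [inf_n lt_s] := in_use_special use_n spec_n.
  rewrite -(subnKC spec_n) part_special.
  have [le_h _ le_l] := special_rangeP lt_s lt_t.
  case: special_inf; first by rewrite x_eq inf_n; lia.
  by have := @zred_lt m (special_level (n - ndiff) t + g) m_gt0; lia.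
have [lt_k lt_d _] := in_use_regular use_n reg_n.
have [le_h _] := base_rangeP lt_k lt_t.
rewrite part_regular //.
by have := @zred_lt m (level t * (n %/ 4 + 1) + g) m_gt0; have := level_le2 t; nia.
Qed.

Lemma coord_lt n a t : coord n a t < 7.
Proof. exact: ltn_pmod. Qed.

Lemma block_vertex_inj n g a t t' : in_use n -> g < m -> t < 7 -> t' < 7 ->
  part n g t = part n g t' -> coord n a t = coord n a t' -> t = t'.
Proof.
move=> use_n lt_g lt_t lt_t'; have m_gt0 : 0 < m by lia.
have [//|neq_tt'] := eqVneq t t'.
have [spec_n|reg_n] := boolP (is_special n).
  have [_ lt_s] := in_use_special use_n spec_n.
  rewrite -(subnKC spec_n) !part_special !coord_special.
  move: (n - ndiff) lt_s => s lt_s.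
  have [le_h le_a le_l] := special_rangeP lt_s lt_t.
  have [le_h' le_a' le_l'] := special_rangeP lt_s lt_t'.
  have := @zred_lt m (special_level s t + g) m_gt0.
  have := @zred_lt m (special_level s t' + g) m_gt0.
  have := special_vertex_inj lt_s lt_t lt_t' neq_tt'.
  case: (special_inf s t); case: (special_inf s t') => /=.
  - by move=> /orP [] /eqP; lia.
  - by lia.
  - by lia.
  move=> neq_v _ _ Epart; have [Ered Eh] : zred m (special_level s t + g) =
      zred m (special_level s t' + g) /\ special_h s t = special_h s t' by lia.
  by move: neq_v; rewrite (zred_add_inj m_ge3 lt_g le_l le_l' Ered) Eh !eqxx /= => /eqP; lia.
have [lt_k lt_d _] := in_use_regular use_n reg_n.
rewrite !part_regular // !coord_regular //.
move: (n %% 4) (n %/ 4 + 1) lt_k lt_d => k d lt_k lt_d.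
have [le_h le_a] := base_rangeP lt_k lt_t; have [le_h' le_a'] := base_rangeP lt_k lt_t'.
move=> Epart; have [Ered Eh] : zred m (level t * d + g) = zred m (level t' * d + g) /\
  base_h k t = base_h k t' by lia.
have := base_vertex_inj lt_k lt_t lt_t' neq_tt'.
have [Elv|neq_lv] := eqVneq (level t) (level t').
  by rewrite Eh !eqxx /= => /eqP; lia.
have := zred_mul_add_neq odd_m m_ge3 (level_le2 _) (level_le2 _) neq_lv lt_d lt_g.
by rewrite Ered eqxx.
Qed.

Lemma block_arc_cross n g e : in_use n -> g < m -> e < 7 ->
  part n g (arc_tail e) %/ 2 != part n g (arc_head e) %/ 2.
Proof.
move=> use_n lt_g lt_e; have m_gt0 : 0 < m by lia.
have [lt_p lt_q neq_lv] := arcP lt_e.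
have [spec_n|reg_n] := boolP (is_special n).
  have [_ lt_s] := in_use_special use_n spec_n.
  rewrite -(subnKC spec_n) !part_special.
  move: (n - ndiff) lt_s => s lt_s.
  have [le_h _ le_l] := special_rangeP lt_s lt_p.
  have [le_h' _ le_l'] := special_rangeP lt_s lt_q.
  have := @zred_lt m (special_level s (arc_tail e) + g) m_gt0.
  have := @zred_lt m (special_level s (arc_head e) + g) m_gt0.
  have := special_classP lt_s lt_e; rewrite /special_kind.
  case: (special_inf s (arc_tail e)); case: (special_inf s (arc_head e)) => //= + ? ?;
    rewrite ?divn2_double_add //; try (move=> *; apply/eqP; lia).
  move=> /and5P [_ lt_e0 /eqP Elv /eqP Elv' _]; apply/eqP => Ered.
  have [_ _] := arcP lt_e0; rewrite -Elv -Elv' (zred_add_inj m_ge3 lt_g le_l le_l' Ered).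
  by rewrite eqxx.
have [lt_k lt_d _] := in_use_regular use_n reg_n.
have [le_h _] := base_rangeP lt_k lt_p; have [le_h' _] := base_rangeP lt_k lt_q.
rewrite !part_regular // !divn2_double_add //.
by move: (zred_mul_add_neq odd_m m_ge3 (level_le2 _) (level_le2 _) neq_lv lt_d lt_g).
Qed.

Definition decode_special (z : nat * nat) t g a :=
  (ndiff + z.1, (zsub m g (special_level z.1 t), diff7 (special_a z.1 t) a)).

Definition decode_finite g g' a c :=
  let z := base_arc_of c in
  let d := zsolve m (level (arc_tail z.2)) (level (arc_head z.2)) (zsub m g' g) in
  if [&& inf, d == 1 & replaced z.1] then
    let z' := replacement z.1 z.2 in decode_special z' (arc_tail z'.2) g a
  else (4 * (d - 1) + z.1,
        (zsub m g (zred m (level (arc_tail z.2) * d)), diff7 (base_a z.1 (arc_tail z.2)) a)).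

(* The block, as (base block, translation), containing the arc from (J, a) to (J', a'):
   the class (J %% 2, J' %% 2, a' - a) determines the base arc, and the difference of the
   two groups determines d. *)
Definition decode J a J' a' :=
  let g := J %/ 2 in let g' := J' %/ 2 in let c := (J %% 2, J' %% 2, diff7 a a') in
  if (g < m) && (g' < m) then decode_finite g g' a c
  else if g < m then let z := special_arc_of 2 c in decode_special z (arc_tail z.2) g a
  else let z := special_arc_of 1 c in decode_special z (arc_head z.2) g' a'.

Lemma decode_specialK s e t g a : s < 10 -> t < 7 -> g < m -> a < 7 ->
  decode_special (s, e) t (zred m (special_level s t + g)) ((special_a s t + a) %% 7) =
  (ndiff + s, (g, a)).
Proof.
move=> lt_s lt_t lt_g lt_a; have [_ lt_sa le_l] := special_rangeP lt_s lt_t.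
by rewrite /decode_special zred_addK // diff7_addK.
Qed.

Lemma decode_regular_block n g a e : in_use n -> ~~ is_special n -> g < m -> a < 7 -> e < 7 ->
  decode (part n g (arc_tail e)) (coord n a (arc_tail e))
         (part n g (arc_head e)) (coord n a (arc_head e)) =
  (n, (g, a)).
Proof.
move=> use_n reg_n lt_g lt_a lt_e; have m_gt0 : 0 < m by lia.
have [lt_p lt_q neq_lv] := arcP lt_e.
have [lt_k lt_d not_rep] := in_use_regular use_n reg_n.
rewrite !part_regular // !coord_regular //.
have En : 4 * (n %/ 4 + 1 - 1) + n %% 4 = n by lia.
move: (n %% 4) (n %/ 4 + 1) lt_k lt_d not_rep En => k d lt_k lt_d not_rep En.
have [le_h le_a] := base_rangeP lt_k lt_p; have [le_h' le_a'] := base_rangeP lt_k lt_q.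
have lt_r t : zred m (level t * d + g) < m.
  by apply: zred_lt => //; have := level_le2 t; nia.
rewrite /decode !divn2_double_add // !modn2_double_add // diff7_translate // !lt_r /=.
rewrite /decode_finite -/(base_class k e) base_arc_ofK //=.
rewrite zsolve_zsub // ?level_le2 // (negPf not_rep) zsub_zred_mul ?level_le2 //; last lia.
by rewrite diff7_addK // En.
Qed.

Lemma decode_special_block s g a e : inf -> s < 10 -> g < m -> a < 7 -> e < 7 ->
  decode (part (ndiff + s) g (arc_tail e)) (coord (ndiff + s) a (arc_tail e))
         (part (ndiff + s) g (arc_head e)) (coord (ndiff + s) a (arc_head e)) = (ndiff + s, (g, a)).
Proof.
move=> inf_x lt_s lt_g lt_a lt_e; have m_gt0 : 0 < m by lia.
have [lt_p lt_q _] := arcP lt_e.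
have [le_h le_a le_l] := special_rangeP lt_s lt_p.
have [le_h' le_a' le_l'] := special_rangeP lt_s lt_q.
have lt_r t : special_level s t <= 2 -> zred m (special_level s t + g) < m.
  by move=> le_lt; apply: zred_lt; lia.
have := special_classP lt_s lt_e; rewrite !part_special !coord_special /special_kind.
case: (special_inf s (arc_tail e)); case: (special_inf s (arc_head e)) => //= class_e;
  rewrite /decode !divn2_double_add // !modn2_double_add // diff7_translate //
    -/(special_class s e) ?lt_r ?ltnn //=.
- by rewrite (eqP class_e) decode_specialK.
- by rewrite (eqP class_e) decode_specialK.
move: class_e => /and5P [rep_k lt_e0 /eqP Elv /eqP Elv' /eqP Erep].
have [_ _ neq_lv] := arcP lt_e0.
have Ed : zsolve m (level (arc_tail (base_arc_of (special_class s e)).2))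
                   (level (arc_head (base_arc_of (special_class s e)).2))
                   (zsub m (zred m (special_level s (arc_head e) + g))
                           (zred m (special_level s (arc_tail e) + g))) = 1.
  have := zsolve_zsub odd_m m_ge3 (level_le2 _) (level_le2 _) neq_lv (_ : 0 < 1 < m) lt_g.
  by rewrite !muln1 -Elv -Elv'; apply; lia.
by rewrite /decode_finite Ed inf_x rep_k Erep [(s, e).2]/= decode_specialK.
Qed.

Lemma decode_block n g a e : in_use n -> g < m -> a < 7 -> e < 7 ->
  decode (part n g (arc_tail e)) (coord n a (arc_tail e))
         (part n g (arc_head e)) (coord n a (arc_head e)) =
  (n, (g, a)).
Proof.
move=> use_n lt_g lt_a lt_e.
have [spec_n|reg_n] := boolP (is_special n); last exact: decode_regular_block.
have [inf_x lt_s] := in_use_special use_n spec_n.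
by rewrite -(subnKC spec_n) decode_special_block.
Qed.

Definition carries (r : nat * (nat * nat)) J a J' a' :=
  [/\ in_use r.1, r.2.1 < m, r.2.2 < 7 &
      exists2 e, e < 7 & [/\ part r.1 r.2.1 (arc_tail e) = J, coord r.1 r.2.2 (arc_tail e) = a,
                             part r.1 r.2.1 (arc_head e) = J' & coord r.1 r.2.2 (arc_head e) = a']].

Lemma in_use_special_block s : inf -> s < 10 -> in_use (ndiff + s).
Proof. by move=> inf_x lt_s; rewrite /in_use inf_x leq_addr ltn_add2l lt_s orbT. Qed.

Lemma replacement_carries k e g g' h h' a a' : inf -> replaced k -> e < 7 ->
  g < m -> g' < m -> g != g' -> a < 7 -> a' < 7 ->
  base_class k e = (h, h', diff7 a a') ->
  zsolve m (level (arc_tail e)) (level (arc_head e)) (zsub m g' g) = 1 ->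
  let z := replacement k e in
  carries (decode_special z (arc_tail z.2) g a) (2 * g + h) a (2 * g' + h') a'.
Proof.
move=> inf_x rep_k lt_e lt_g lt_g' neq_gg' lt_a lt_a' class_e d1.
have [lt_p lt_q neq_lv] := arcP lt_e.
have [_ Eg Eg'] :=
  zsolve_translate odd_m m_ge3 (level_le2 _) (level_le2 _) neq_lv lt_g lt_g' neq_gg'.
have small_t : zred m (level (arc_tail e)) = level (arc_tail e).
  by apply: zred_small; have := level_le2 (arc_tail e); lia.
rewrite d1 !muln1 small_t in Eg Eg'.
have [lt_s lt_e' kind_e' class_e' [Elv Elv']] := replacementP rep_k lt_e.
move: (replacement k e) lt_s lt_e' kind_e' class_e' Elv Elv' =>
  [s e'] /= lt_s lt_e' kind_e' class_e' Elv Elv'.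
have [lt_p' lt_q' _] := arcP lt_e'.
have [_ le_a le_l] := special_rangeP lt_s lt_p'; have [_ le_a' _] := special_rangeP lt_s lt_q'.
have [/negPf fin_t /negPf fin_h] : ~~ special_inf s (arc_tail e') /\ ~~ special_inf s (arc_head e').
  by move: kind_e'; rewrite /special_kind; do 2 case: special_inf.
move: class_e'; rewrite class_e /special_class => -[Eh Eh' Ea].
rewrite /decode_special /=.
split; [exact: in_use_special_block | by apply: zsub_lt; lia | exact: diff7_lt |].
exists e' => //; rewrite !part_special !coord_special fin_t fin_h.
by rewrite Elv Elv' Eg Eg' Eh Eh' add_diff7 // (add_diff7_head le_a le_a' lt_a lt_a' Ea).
Qed.

Lemma regular_carries k e g g' h h' a a' : k < 4 -> e < 7 ->
  g < m -> g' < m -> g != g' -> a < 7 -> a' < 7 ->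
  base_class k e = (h, h', diff7 a a') ->
  let d := zsolve m (level (arc_tail e)) (level (arc_head e)) (zsub m g' g) in
  ~~ [&& inf, d == 1 & replaced k] ->
  carries (4 * (d - 1) + k,
           (zsub m g (zred m (level (arc_tail e) * d)), diff7 (base_a k (arc_tail e)) a))
          (2 * g + h) a (2 * g' + h') a'.
Proof.
move=> lt_k lt_e lt_g lt_g' neq_gg' lt_a lt_a' class_e d not_rep.
have [lt_p lt_q neq_lv] := arcP lt_e.
have [lt_d Eg Eg'] :=
  zsolve_translate odd_m m_ge3 (level_le2 _) (level_le2 _) neq_lv lt_g lt_g' neq_gg'.
rewrite -/d in lt_d Eg Eg'.
have [_ le_a] := base_rangeP lt_k lt_p; have [_ le_a'] := base_rangeP lt_k lt_q.
move: class_e; rewrite /base_class => -[Eh Eh' Ea].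
have lt_n : 4 * (d - 1) + k < ndiff by rewrite /ndiff; lia.
have reg_n : ~~ is_special (4 * (d - 1) + k) by rewrite /is_special -ltnNge.
have Ediv : (4 * (d - 1) + k) %/ 4 = d - 1 by lia.
have Emod : (4 * (d - 1) + k) %% 4 = k by lia.
split => /=.
- rewrite /in_use lt_n Ediv Emod (_ : (d - 1 == 0) = (d == 1)) ?not_rep //.
  by apply/eqP/eqP; lia.
- by apply: zsub_lt; [| apply: ltnW; apply: zred_lt; have := level_le2 (arc_tail e)]; nia.
- exact: diff7_lt.
exists e => //; rewrite !part_regular // !coord_regular // Ediv Emod subnK; last lia.
by rewrite Eg Eg' Eh Eh' add_diff7 // (add_diff7_head le_a le_a' lt_a lt_a' Ea).
Qed.

Lemma decode_finite_carries g g' h h' a a' : g < m -> g' < m -> g != g' ->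
  h < 2 -> h' < 2 -> a < 7 -> a' < 7 ->
  carries (decode_finite g g' a (h, h', diff7 a a')) (2 * g + h) a (2 * g' + h') a'.
Proof.
move=> lt_g lt_g' neq_gg' lt_h lt_h' lt_a lt_a'.
have [lt_k lt_e class_e] := base_arc_ofP lt_h lt_h' (diff7_lt a a').
rewrite /decode_finite; move: (base_arc_of _) lt_k lt_e class_e => [k e] /= lt_k lt_e class_e.
case: ifP => [/and3P [inf_x /eqP d1 rep_k] | /negbT not_rep].
  exact: replacement_carries.
exact: regular_carries.
Qed.

Lemma to_inf_carries g h h' a a' : inf -> g < m -> h < 2 -> h' < 2 -> a < 7 -> a' < 7 ->
  let z := special_arc_of 2 (h, h', diff7 a a') in
  carries (decode_special z (arc_tail z.2) g a) (2 * g + h) a (2 * m + h') a'.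
Proof.
move=> inf_x lt_g lt_h lt_h' lt_a lt_a'.
have [] := special_arc_ofP (isT : (2 == 1) || (2 == 2)) lt_h lt_h' (diff7_lt a a').
move: (special_arc_of _ _) => [s e] /= lt_s lt_e kind_e class_e.
have [lt_p lt_q _] := arcP lt_e.
have [_ le_a le_l] := special_rangeP lt_s lt_p; have [_ le_a' _] := special_rangeP lt_s lt_q.
have [/negPf fin_t inf_h] : ~~ special_inf s (arc_tail e) /\ special_inf s (arc_head e).
  by move: kind_e; rewrite /special_kind; do 2 case: special_inf.
move: class_e; rewrite /special_class => -[Eh Eh' Ea].
rewrite /decode_special /=.
split; [exact: in_use_special_block | by apply: zsub_lt; lia | exact: diff7_lt |].
exists e => //; rewrite !part_special !coord_special fin_t inf_h.
by rewrite zsubKC // Eh Eh' add_diff7 // (add_diff7_head le_a le_a' lt_a lt_a' Ea).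
Qed.

Lemma from_inf_carries g' h h' a a' : inf -> g' < m -> h < 2 -> h' < 2 -> a < 7 -> a' < 7 ->
  let z := special_arc_of 1 (h, h', diff7 a a') in
  carries (decode_special z (arc_head z.2) g' a') (2 * m + h) a (2 * g' + h') a'.
Proof.
move=> inf_x lt_g' lt_h lt_h' lt_a lt_a'.
have [] := special_arc_ofP (isT : (1 == 1) || (1 == 2)) lt_h lt_h' (diff7_lt a a').
move: (special_arc_of _ _) => [s e] /= lt_s lt_e kind_e class_e.
have [lt_p lt_q _] := arcP lt_e.
have [_ le_a _] := special_rangeP lt_s lt_p; have [_ le_a' le_l] := special_rangeP lt_s lt_q.
have [inf_t /negPf fin_h] : special_inf s (arc_tail e) /\ ~~ special_inf s (arc_head e).
  by move: kind_e; rewrite /special_kind; do 2 case: special_inf.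
move: class_e; rewrite /special_class => -[Eh Eh' Ea].
rewrite /decode_special /=.
split; [exact: in_use_special_block | by apply: zsub_lt; lia | exact: diff7_lt |].
exists e => //; rewrite !part_special !coord_special inf_t fin_h.
by rewrite zsubKC // Eh Eh' add_diff7 // (add_diff7_tail le_a le_a' lt_a lt_a' Ea).
Qed.

Lemma decodeP g h g' h' a a' : g < x -> g' < x -> g != g' ->
  h < 2 -> h' < 2 -> a < 7 -> a' < 7 ->
  carries (decode (2 * g + h) a (2 * g' + h') a') (2 * g + h) a (2 * g' + h') a'.
Proof.
move=> lt_g lt_g' neq_gg' lt_h lt_h' lt_a lt_a'.
rewrite /decode !divn2_double_add ?modn2_double_add //; try lia.
have [lt_gm|le_mg] := ltnP g m; have [lt_g'm|le_mg'] := ltnP g' m => /=.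
- exact: decode_finite_carries.
- have inf_x : inf by move: lt_g'; rewrite x_eq; case: inf => //; lia.
  have -> : g' = m by move: lt_g'; rewrite x_eq inf_x; lia.
  exact: to_inf_carries.
- have inf_x : inf by move: lt_g; rewrite x_eq; case: inf => //; lia.
  have -> : g = m by move: lt_g; rewrite x_eq inf_x; lia.
  exact: from_inf_carries.
- by move: lt_g lt_g' neq_gg'; rewrite x_eq; case: inf; lia.
Qed.

Lemma double_x_gt0 : 0 < 2 * x.
Proof. lia. Qed.

Definition vertex J a : Vx x :=
  (Ordinal (ltn_pmod J double_x_gt0), Ordinal (ltn_pmod a (isT : 0 < 7))).

Lemma vertex_part J a : J < 2 * x -> (vertex J a).1 = J :> nat.
Proof. by move=> lt_J; rewrite /= modn_small. Qed.

Lemma vertex_coord J a : a < 7 -> (vertex J a).2 = a :> nat.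
Proof. by move=> lt_a; rewrite /= modn_small. Qed.

Lemma vertexK (u : Vx x) : vertex u.1 u.2 = u.
Proof. by case: u => J a; congr (_, _); apply: val_inj; rewrite /= modn_small. Qed.

Definition block (z : nat * (nat * nat)) : {ffun 'I_7 -> Vx x} :=
  [ffun t : 'I_7 => vertex (part z.1 z.2.1 t) (coord z.1 z.2.2 t)].

Lemma blockE z t : t < 7 -> block z (inord t) = vertex (part z.1 z.2.1 t) (coord z.1 z.2.2 t).
Proof. by move=> lt_t; rewrite ffunE inordK. Qed.

Definition block_index :=
  [seq z <- [seq (n, ga) | n <- iota 0 (ndiff + 10),
                            ga <- [seq (g, a) | g <- iota 0 m, a <- iota 0 7]] | in_use z.1].

Lemma mem_block_index z : (z \in block_index) = [&& in_use z.1, z.2.1 < m & z.2.2 < 7].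
Proof.
case: z => n [g a]; rewrite mem_filter; case use_n: (in_use n); rewrite ?andTb //.
apply/allpairsP/andP => [[[n' [g' a']] [_ ga_in [_ -> ->]]] | [lt_g lt_a]].
  by move/allpairsP: ga_in => [[g'' a''] [+ + [-> ->]]]; rewrite !mem_iota /=; lia.
exists (n, (g, a)); rewrite mem_iota in_use_lt //; split=> //.
by apply/allpairsP; exists (g, a); rewrite !mem_iota /= !add0n; split.
Qed.

Lemma uniq_block_index : uniq block_index.
Proof.
apply/filter_uniq/allpairs_uniq => [||[? ?] [? ?] _ _ [-> ->]] //; first exact: iota_uniq.
by apply: allpairs_uniq => [||[? ?] [? ?] _ _ [-> ->]] //; apply: iota_uniq.
Qed.

Definition decode_arc (u v : Vx x) := decode u.1 u.2 v.1 v.2.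

Lemma construction_decomposition : is_decomposition (@Kx x) A (map block block_index).
Proof.
apply: (@decomposition_from_decoder _ _ _ _ _ _ decode_arc uniq_block_index).
- move=> [n [g a]]; rewrite mem_block_index => /and3P [use_n lt_g lt_a] t t'.
  rewrite !ffunE => /pair_equal_spec [/(congr1 val) Epart /(congr1 val) Ecoord].
  rewrite /= !modn_small ?part_lt ?coord_lt // in Epart Ecoord.
  exact/val_inj/(block_vertex_inj use_n lt_g (ltn_ord t) (ltn_ord t') Epart Ecoord).
- move=> [n [g a]] u v; rewrite mem_block_index => /and3P [use_n lt_g lt_a].
  move=> /copy_arcsP [e]; rewrite size_arcs => lt_e [<- <-].
  have [lt_p lt_q _] := arcP lt_e.
  rewrite /Kx /decode_arc !blockE // !vertex_part ?vertex_coord ?part_lt ?coord_lt //.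
  by split; [apply: block_arc_cross | apply: decode_block].
move=> u v Kuv.
have lt_u := ltn_ord u.1; have lt_v := ltn_ord v.1.
have lt_a := ltn_ord u.2; have lt_a' := ltn_ord v.2.
have [use_r lt_g lt_a0 [e lt_e [Etp Eta Ehp Eha]]] : carries (decode_arc u v) u.1 u.2 v.1 v.2.
  rewrite /decode_arc (divn_eq u.1 2) (divn_eq v.1 2) ![_ * 2]mulnC.
  by apply: decodeP Kuv _ _ _ _ => //; lia.
split; first by rewrite mem_block_index use_r lt_g lt_a0.
have [lt_p lt_q _] := arcP lt_e.
apply/copy_arcsP; exists e; rewrite ?size_arcs //.
by rewrite !blockE // Etp Eta Ehp Eha !vertexK.
Qed.

End Construction.

Theorem certificate_decomposition x : 3 <= x ->
  exists B : seq {ffun 'I_7 -> Vx x}, is_decomposition (@Kx x) A B.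
Proof.
move=> /odd_split [x_eq odd_m m_ge3].
by eexists; apply: (construction_decomposition x_eq odd_m m_ge3).
Qed.

End Certificate.

(** * The certificates for D_1, ..., D_8 *)

Definition special_inf_shared :=
  [:: [:: 0; 0; 0; 0; 1; 0; 1]; [:: 1; 0; 1; 0; 0; 1; 0]; [:: 0; 1; 0; 1; 0; 0; 1];
      [:: 1; 0; 1; 0; 1; 0; 0]; [:: 0; 1; 0; 1; 0; 1; 0]; [:: 0; 1; 0; 0; 0; 0; 1];
      [:: 1; 0; 1; 0; 1; 0; 0]; [:: 0; 1; 0; 1; 0; 1; 0]; [:: 0; 0; 1; 0; 1; 0; 1];
      [:: 1; 0; 0; 1; 0; 1; 0]].

Definition special_level_shared :=
  [:: [:: 0; 1; 0; 1; 0; 0; 0]; [:: 0; 0; 0; 1; 0; 0; 0]; [:: 0; 0; 0; 0; 0; 1; 0];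
      [:: 0; 0; 0; 0; 0; 1; 2]; [:: 0; 0; 0; 0; 0; 0; 2]; [:: 0; 0; 0; 1; 0; 1; 0];
      [:: 0; 0; 0; 0; 0; 1; 2]; [:: 0; 0; 0; 0; 0; 0; 2]; [:: 0; 1; 0; 0; 0; 0; 0];
      [:: 0; 1; 0; 0; 0; 0; 0]].

Definition certificate1 := {|
  base_h_table :=
    [:: [:: 1; 0; 1; 0; 0; 0; 0]; [:: 0; 1; 1; 0; 1; 0; 0]; [:: 1; 1; 1; 1; 0; 1; 0];
        [:: 1; 1; 1; 0; 0; 0; 1]];
  base_a_table :=
    [:: [:: 0; 6; 5; 5; 0; 0; 3]; [:: 0; 1; 0; 5; 5; 0; 1]; [:: 0; 2; 6; 6; 3; 1; 4];
        [:: 0; 5; 6; 0; 5; 2; 4]];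
  special_inf_table := special_inf_shared;
  special_level_table := special_level_shared;
  special_h_table :=
    [:: [:: 1; 1; 1; 0; 0; 1; 0]; [:: 1; 0; 0; 0; 0; 0; 0]; [:: 1; 1; 1; 0; 0; 0; 0];
        [:: 0; 0; 1; 0; 0; 0; 1]; [:: 1; 0; 1; 1; 0; 1; 1]; [:: 0; 1; 1; 0; 1; 0; 1];
        [:: 1; 1; 1; 1; 0; 0; 0]; [:: 0; 1; 1; 1; 1; 0; 0]; [:: 0; 1; 0; 1; 0; 0; 1];
        [:: 1; 1; 1; 1; 0; 0; 1]];
  special_a_table :=
    [:: [:: 0; 5; 6; 0; 5; 4; 3]; [:: 1; 4; 0; 0; 5; 4; 1]; [:: 4; 0; 0; 0; 5; 2; 6];
        [:: 0; 6; 0; 1; 1; 2; 4]; [:: 0; 5; 5; 6; 5; 3; 4]; [:: 1; 5; 0; 5; 5; 0; 3];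
        [:: 0; 5; 2; 0; 4; 0; 1]; [:: 0; 5; 4; 4; 0; 2; 1]; [:: 0; 1; 6; 2; 3; 5; 0];
        [:: 4; 1; 0; 5; 2; 4; 5]];
  replaced1 := 3; replaced2 := 1 |}.

Definition certificate2 := {|
  base_h_table :=
    [:: [:: 0; 0; 0; 0; 1; 0; 1]; [:: 1; 0; 0; 0; 1; 1; 0]; [:: 1; 1; 1; 0; 0; 1; 1];
        [:: 0; 0; 1; 1; 1; 0; 1]];
  base_a_table :=
    [:: [:: 0; 6; 6; 2; 2; 1; 2]; [:: 0; 4; 0; 2; 4; 0; 1]; [:: 0; 0; 3; 3; 1; 6; 1];
        [:: 0; 1; 5; 3; 4; 6; 3]];
  special_inf_table := special_inf_shared;
  special_level_table := special_level_shared;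
  special_h_table :=
    [:: [:: 0; 0; 1; 1; 1; 0; 0]; [:: 0; 0; 1; 1; 1; 0; 0]; [:: 1; 1; 1; 1; 1; 0; 0];
        [:: 1; 0; 0; 0; 0; 0; 1]; [:: 0; 0; 1; 0; 1; 0; 1]; [:: 1; 1; 0; 0; 1; 1; 1];
        [:: 1; 0; 0; 1; 0; 1; 0]; [:: 1; 1; 1; 1; 0; 1; 0]; [:: 1; 0; 1; 0; 0; 1; 0];
        [:: 0; 0; 0; 1; 0; 1; 1]];
  special_a_table :=
    [:: [:: 0; 1; 5; 3; 5; 2; 6]; [:: 5; 0; 1; 3; 4; 1; 5]; [:: 6; 3; 0; 0; 4; 6; 0];
        [:: 4; 4; 6; 2; 4; 6; 3]; [:: 0; 0; 2; 1; 6; 2; 3]; [:: 5; 5; 0; 2; 4; 0; 4];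
        [:: 3; 2; 3; 6; 0; 0; 1]; [:: 0; 2; 3; 1; 4; 3; 1]; [:: 0; 4; 4; 5; 1; 3; 3];
        [:: 3; 4; 0; 4; 6; 2; 1]];
  replaced1 := 3; replaced2 := 1 |}.

Definition certificate3 := {|
  base_h_table :=
    [:: [:: 0; 0; 1; 1; 0; 1; 1]; [:: 1; 0; 0; 0; 1; 1; 0]; [:: 0; 0; 1; 1; 1; 0; 0];
        [:: 0; 1; 0; 0; 1; 1; 1]];
  base_a_table :=
    [:: [:: 0; 6; 1; 3; 6; 0; 3]; [:: 0; 2; 0; 0; 4; 4; 4]; [:: 0; 4; 3; 6; 5; 6; 5];
        [:: 0; 1; 3; 6; 6; 0; 2]];
  special_inf_table := special_inf_shared;
  special_level_table := special_level_shared;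
  special_h_table :=
    [:: [:: 0; 1; 0; 0; 1; 1; 0]; [:: 0; 1; 1; 0; 1; 1; 1]; [:: 1; 1; 0; 0; 1; 1; 1];
        [:: 1; 0; 0; 1; 0; 1; 1]; [:: 0; 1; 0; 0; 0; 0; 1]; [:: 0; 0; 0; 0; 1; 1; 0];
        [:: 1; 1; 0; 0; 1; 1; 0]; [:: 1; 1; 1; 0; 1; 1; 0]; [:: 1; 0; 0; 0; 1; 0; 0];
        [:: 1; 0; 0; 1; 0; 0; 1]];
  special_a_table :=
    [:: [:: 0; 1; 3; 6; 4; 4; 3]; [:: 5; 0; 2; 6; 6; 0; 3]; [:: 1; 3; 5; 3; 6; 0; 4];
        [:: 0; 1; 2; 6; 3; 0; 2]; [:: 0; 4; 2; 1; 6; 2; 2]; [:: 1; 1; 0; 0; 4; 4; 5];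
        [:: 4; 1; 1; 2; 3; 4; 4]; [:: 0; 5; 4; 2; 1; 0; 4]; [:: 0; 2; 0; 3; 5; 6; 6];
        [:: 6; 2; 0; 0; 6; 1; 6]];
  replaced1 := 3; replaced2 := 1 |}.

Definition certificate4 := {|
  base_h_table :=
    [:: [:: 1; 0; 1; 0; 0; 0; 0]; [:: 0; 1; 1; 0; 1; 0; 0]; [:: 1; 1; 1; 1; 0; 1; 0];
        [:: 1; 1; 1; 0; 0; 0; 1]];
  base_a_table :=
    [:: [:: 0; 6; 5; 5; 0; 0; 3]; [:: 0; 1; 0; 5; 4; 0; 1]; [:: 0; 6; 6; 1; 3; 5; 0];
        [:: 0; 2; 5; 2; 5; 0; 3]];
  special_inf_table := special_inf_shared;
  special_level_table := special_level_shared;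
  special_h_table :=
    [:: [:: 1; 1; 1; 0; 0; 0; 1]; [:: 1; 1; 1; 0; 0; 1; 0]; [:: 0; 0; 1; 0; 0; 0; 1];
        [:: 0; 0; 0; 1; 0; 0; 1]; [:: 1; 1; 1; 0; 0; 0; 1]; [:: 0; 1; 1; 0; 1; 0; 0];
        [:: 1; 0; 0; 1; 1; 0; 0]; [:: 0; 0; 1; 0; 1; 0; 0]; [:: 0; 1; 0; 1; 1; 1; 1];
        [:: 1; 1; 1; 1; 1; 1; 0]];
  special_a_table :=
    [:: [:: 0; 2; 5; 2; 1; 0; 0]; [:: 0; 1; 4; 2; 5; 3; 6]; [:: 4; 6; 6; 0; 5; 0; 4];
        [:: 6; 6; 4; 5; 0; 0; 3]; [:: 0; 2; 5; 5; 6; 0; 3]; [:: 6; 5; 0; 5; 4; 0; 4];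
        [:: 0; 4; 0; 2; 3; 0; 1]; [:: 0; 3; 2; 1; 3; 5; 1]; [:: 0; 1; 5; 2; 1; 5; 5];
        [:: 5; 1; 0; 1; 6; 4; 3]];
  replaced1 := 3; replaced2 := 1 |}.

Definition certificate5 := {|
  base_h_table :=
    [:: [:: 0; 0; 1; 1; 0; 0; 1]; [:: 1; 1; 1; 1; 0; 0; 1]; [:: 1; 1; 0; 0; 1; 0; 1];
        [:: 0; 0; 1; 0; 1; 0; 0]];
  base_a_table :=
    [:: [:: 0; 0; 0; 5; 6; 3; 2]; [:: 0; 2; 2; 6; 3; 6; 1]; [:: 0; 6; 3; 2; 3; 6; 3];
        [:: 0; 5; 6; 1; 1; 3; 1]];
  special_inf_table := special_inf_shared;
  special_level_table := special_level_shared;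
  special_h_table :=
    [:: [:: 0; 0; 1; 0; 1; 1; 0]; [:: 0; 1; 0; 0; 1; 0; 1]; [:: 1; 0; 0; 0; 1; 0; 0];
        [:: 1; 0; 1; 1; 1; 0; 0]; [:: 0; 0; 0; 1; 1; 0; 0]; [:: 0; 1; 1; 1; 0; 0; 0];
        [:: 1; 1; 1; 1; 0; 0; 1]; [:: 1; 1; 0; 0; 1; 1; 1]; [:: 1; 1; 0; 0; 1; 0; 1];
        [:: 0; 1; 1; 1; 0; 1; 0]];
  special_a_table :=
    [:: [:: 0; 5; 6; 1; 5; 4; 5]; [:: 2; 2; 1; 1; 1; 3; 6]; [:: 5; 5; 6; 6; 1; 3; 0];
        [:: 0; 5; 1; 6; 3; 3; 1]; [:: 0; 1; 6; 5; 6; 3; 1]; [:: 5; 3; 2; 6; 3; 6; 2];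
        [:: 6; 0; 4; 4; 2; 6; 1]; [:: 0; 2; 2; 1; 5; 1; 1]; [:: 0; 2; 3; 5; 1; 4; 5];
        [:: 1; 2; 2; 5; 3; 1; 0]];
  replaced1 := 3; replaced2 := 1 |}.

Definition certificate6 := {|
  base_h_table :=
    [:: [:: 1; 1; 1; 1; 0; 0; 1]; [:: 0; 1; 1; 1; 1; 0; 1]; [:: 0; 0; 1; 0; 1; 0; 0];
        [:: 1; 0; 0; 0; 0; 1; 0]];
  base_a_table :=
    [:: [:: 0; 5; 6; 0; 1; 6; 0]; [:: 0; 5; 1; 6; 2; 6; 1]; [:: 0; 4; 1; 5; 5; 1; 0];
        [:: 0; 2; 1; 5; 3; 3; 1]];
  special_inf_table := special_inf_shared;
  special_level_table := special_level_shared;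
  special_h_table :=
    [:: [:: 1; 0; 0; 0; 0; 1; 1]; [:: 0; 1; 0; 0; 0; 1; 1]; [:: 1; 0; 0; 0; 0; 1; 1];
        [:: 1; 0; 1; 0; 1; 1; 0]; [:: 1; 1; 0; 1; 1; 0; 0]; [:: 1; 0; 1; 1; 1; 0; 0];
        [:: 0; 0; 0; 1; 1; 0; 1]; [:: 0; 0; 0; 1; 0; 1; 1]; [:: 0; 1; 0; 0; 0; 1; 1];
        [:: 1; 1; 1; 0; 0; 1; 1]];
  special_a_table :=
    [:: [:: 0; 2; 1; 5; 6; 5; 6]; [:: 3; 5; 0; 5; 3; 2; 6]; [:: 1; 0; 1; 1; 3; 3; 3];
        [:: 4; 5; 6; 4; 5; 3; 1]; [:: 0; 4; 4; 6; 1; 4; 1]; [:: 4; 4; 1; 6; 2; 6; 2];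
        [:: 1; 3; 2; 5; 4; 6; 1]; [:: 0; 1; 4; 1; 5; 2; 1]; [:: 0; 5; 6; 6; 1; 2; 5];
        [:: 3; 5; 1; 3; 6; 6; 6]];
  replaced1 := 3; replaced2 := 1 |}.

Definition certificate7 := {|
  base_h_table :=
    [:: [:: 0; 0; 1; 1; 1; 0; 0]; [:: 1; 0; 1; 1; 0; 1; 1]; [:: 0; 1; 0; 1; 0; 1; 0];
        [:: 0; 0; 0; 0; 1; 1; 1]];
  base_a_table :=
    [:: [:: 0; 3; 4; 1; 5; 5; 2]; [:: 0; 3; 5; 0; 5; 1; 6]; [:: 0; 5; 1; 2; 3; 3; 5];
        [:: 0; 0; 6; 5; 4; 3; 3]];
  special_inf_table := special_inf_shared;
  special_level_table := special_level_shared;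
  special_h_table :=
    [:: [:: 0; 0; 0; 0; 1; 0; 0]; [:: 1; 1; 0; 0; 1; 0; 0]; [:: 0; 1; 0; 1; 1; 1; 0];
        [:: 1; 1; 1; 1; 0; 1; 1]; [:: 0; 0; 1; 1; 0; 1; 1]; [:: 0; 1; 1; 1; 0; 1; 0];
        [:: 0; 0; 0; 0; 1; 1; 1]; [:: 1; 0; 1; 1; 0; 0; 1]; [:: 1; 0; 1; 0; 0; 0; 0];
        [:: 1; 0; 1; 1; 1; 0; 1]];
  special_a_table :=
    [:: [:: 0; 0; 6; 5; 3; 3; 2]; [:: 0; 0; 2; 5; 4; 0; 6]; [:: 5; 2; 1; 0; 4; 3; 5];
        [:: 4; 5; 3; 0; 6; 3; 3]; [:: 0; 4; 0; 4; 1; 0; 3]; [:: 1; 3; 5; 0; 5; 1; 6];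
        [:: 4; 4; 2; 6; 1; 1; 6]; [:: 0; 0; 1; 2; 4; 6; 6]; [:: 0; 3; 0; 0; 6; 5; 1];
        [:: 6; 3; 5; 0; 1; 5; 4]];
  replaced1 := 3; replaced2 := 1 |}.

Definition certificate8 := {|
  base_h_table :=
    [:: [:: 0; 0; 1; 0; 0; 1; 0]; [:: 1; 0; 0; 0; 0; 1; 1]; [:: 1; 0; 0; 1; 1; 1; 0];
        [:: 1; 0; 1; 0; 1; 1; 1]];
  base_a_table :=
    [:: [:: 0; 0; 2; 5; 4; 3; 5]; [:: 0; 3; 0; 4; 5; 1; 5]; [:: 0; 6; 1; 6; 1; 0; 0];
        [:: 0; 5; 1; 2; 3; 3; 4]];
  special_inf_table :=
    [:: [:: 0; 0; 0; 1; 0; 1; 0]; [:: 0; 1; 0; 0; 1; 0; 1]; [:: 1; 0; 1; 0; 0; 1; 0];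
        [:: 0; 1; 0; 1; 0; 0; 1]; [:: 1; 0; 1; 0; 1; 0; 0]; [:: 0; 0; 0; 1; 0; 1; 0];
        [:: 0; 1; 0; 0; 1; 0; 1]; [:: 1; 0; 1; 0; 0; 1; 0]; [:: 0; 1; 0; 1; 0; 0; 1];
        [:: 1; 0; 1; 0; 1; 0; 0]];
  special_level_table :=
    [:: [:: 0; 1; 0; 0; 0; 0; 2]; [:: 0; 0; 0; 1; 0; 0; 0]; [:: 0; 0; 0; 1; 0; 0; 0];
        [:: 0; 0; 0; 0; 0; 1; 0]; [:: 0; 0; 0; 0; 0; 1; 2]; [:: 0; 1; 0; 0; 0; 0; 2];
        [:: 0; 0; 0; 1; 0; 0; 0]; [:: 0; 0; 0; 1; 0; 0; 0]; [:: 0; 0; 0; 0; 0; 1; 0];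
        [:: 0; 0; 0; 0; 0; 1; 2]];
  special_h_table :=
    [:: [:: 1; 0; 0; 1; 1; 0; 1]; [:: 1; 1; 0; 0; 1; 1; 0]; [:: 1; 1; 0; 0; 0; 1; 1];
        [:: 0; 0; 1; 0; 0; 1; 0]; [:: 1; 1; 0; 0; 1; 1; 1]; [:: 1; 0; 0; 0; 0; 1; 0];
        [:: 0; 0; 0; 1; 0; 0; 1]; [:: 1; 1; 1; 1; 1; 0; 0]; [:: 0; 1; 0; 0; 1; 1; 1];
        [:: 0; 0; 1; 1; 0; 1; 0]];
  special_a_table :=
    [:: [:: 0; 3; 0; 4; 2; 4; 5]; [:: 2; 1; 0; 4; 3; 5; 6]; [:: 1; 0; 3; 4; 5; 5; 4];
        [:: 2; 4; 0; 0; 5; 1; 6]; [:: 4; 6; 0; 0; 3; 1; 5]; [:: 0; 6; 1; 1; 3; 1; 0];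
        [:: 4; 0; 1; 6; 4; 3; 6]; [:: 1; 5; 2; 6; 1; 0; 2]; [:: 3; 3; 1; 4; 1; 0; 0];
        [:: 1; 4; 2; 2; 2; 0; 0]];
  replaced1 := 1; replaced2 := 2 |}.

Definition certificate_of i :=
  match i with
  | 1 => certificate1 | 2 => certificate2 | 3 => certificate3 | 4 => certificate4
  | 5 => certificate5 | 6 => certificate6 | 7 => certificate7 | _ => certificate8
  end.

Lemma valid_certificate_of i : 1 <= i <= 8 -> valid_certificate (D_arcs i) (certificate_of i).
Proof. by case: i => [|[|[|[|[|[|[|[|[|i]]]]]]]]] // _; split; vm_compute. Qed.

Theorem lemma3p1 (x i : nat) (hx : 3 <= x) (hi : 1 <= i <= 8) :
  exists B : seq {ffun 'I_7 -> Vx x}, is_decomposition (@Kx x) (D_arcs i) B.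
Proof. exact: (certificate_decomposition (valid_certificate_of hi) hx). Qed.
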